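(* Let $\alpha$ be a graph function on a strongly connected digraph $G$ and let $v$ be a vertex with $\alpha_v^{\text{in}}\neq\alpha_v^{\text{out}}$. If $\bar\alpha$ is the graph function obtained from $\alpha$ by the balancing operation at $v$, then $\bar\alpha<\alpha$ in the order defined below.
   Context: $G$ is a strongly connected directed graph (self-loops allowed); a graph function assigns a real weight $\alpha_{uv}$ to each edge. $\alpha_v^{\text{in}}=\max_{u:(u,v)\in G}\alpha_{uv}$, $\alpha_v^{\text{out}}=\max_{w:(v,w)\in G}\alpha_{vw}$. The balancing operation at $v$ adds $(\alpha_v^{\text{out}}-\alpha_v^{\text{in}})/2$ to each $\alpha_{uv}$ with $u\ne v$, subtracts it from each $\alpha_{vw}$ with $w\ne v$, and leaves a self-loop unchanged. For real $w$, $G_\alpha^w$ is the subgraph of edges $(u,v)$ with $\alpha_{uv}\ge w$, isolated vertices removed (a vertex with a self-loop is not isolated). For two graph functions $\alpha,\gamma$ on $G$, $\alpha<\gamma$ means: for the largest $w$ with $G_\alpha^w\ne G_\gamma^w$, one has $G_\alpha^w\subset G_\gamma^w$. *)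

From mathcomp Require Import all_boot all_order all_algebra.
Set Implicit Arguments. Unset Strict Implicit. Unset Printing Implicit Defensive.
Import Order.TTheory GRing.Theory Num.Theory.
Local Open Scope ring_scope.

(* A directed graph (self-loops allowed) is a finite vertex type V with an edge
   relation E : rel V.  A graph function is alpha : V -> V -> R; only its values
   alpha u v on edges E u v are relevant. *)

Definition strongly_connected (V : finType) (E : rel V) : Prop :=
  forall x y : V, connect E x y.

(* maximum of a nonempty sequence (value irrelevant on the empty sequence) *)
Definition seqmax (R : realDomainType) (s : seq R) : R :=
  foldr Num.max (head 0 s) s.

Definition alpha_in (R : realDomainType) (V : finType) (E : rel V)
  (alpha : V -> V -> R) (v : V) : R :=
  seqmax [seq alpha u v | u <- enum V & E u v].

Definition alpha_out (R : realDomainType) (V : finType) (E : rel V)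
  (alpha : V -> V -> R) (v : V) : R :=
  seqmax [seq alpha v w | w <- enum V & E v w].

Definition balance (R : realFieldType) (V : finType) (E : rel V)
  (alpha : V -> V -> R) (v : V) : V -> V -> R :=
  let d := (alpha_out E alpha v - alpha_in E alpha v) / 2 in
  fun x y =>
    if (y == v) && (x != v) then alpha x y + d
    else if (x == v) && (y != v) then alpha x y - d
    else alpha x y.

Definition subgraph (V : finType) : Type := ({set V} * {set V * V})%type.

(* G_alpha^w : edges (u,v) of G with alpha_{uv} >= w, isolated vertices removed *)
Definition level_edges (R : realDomainType) (V : finType) (E : rel V)
  (alpha : V -> V -> R) (w : R) : {set V * V} :=
  [set e : V * V | E e.1 e.2 && (w <= alpha e.1 e.2)].

Definition level_graph (R : realDomainType) (V : finType) (E : rel V)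
  (alpha : V -> V -> R) (w : R) : subgraph V :=
  let Es := level_edges E alpha w in
  ([set x : V | [exists y : V, ((x, y) \in Es) || ((y, x) \in Es)]], Es).

Definition subgraph_le (V : finType) (H K : subgraph V) : bool :=
  (H.1 \subset K.1) && (H.2 \subset K.2).

Definition subgraph_lt (V : finType) (H K : subgraph V) : bool :=
  subgraph_le H K && (H != K).

(* alpha < gamma : for the largest w with G_alpha^w <> G_gamma^w,
   G_alpha^w is a (proper) subgraph of G_gamma^w. *)
Definition gf_lt (R : realDomainType) (V : finType) (E : rel V)
  (alpha gamma : V -> V -> R) : Prop :=
  exists w : R,
    [/\ level_graph E alpha w <> level_graph E gamma w,
        (forall w' : R, w < w' -> level_graph E alpha w' = level_graph E gamma w') &
        subgraph_lt (level_graph E alpha w) (level_graph E gamma w)].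

(* Let [M] be the larger of [alpha_v^in] and [alpha_v^out].  Balancing only
   moves the weights of the non-loop edges at [v], and since
   [alpha_v^in <> alpha_v^out] each of them ends up strictly below [M], at
   most the average of the two.  So the level graphs of [alpha] and of the
   balanced function agree at every level above [M], while at level [M] the
   edge realising the maximum (which is not a loop) disappears. *)

From mathcomp Require Import all_boot all_order all_algebra.
From mathcomp Require Import lra.
Set Implicit Arguments. Unset Strict Implicit. Unset Printing Implicit Defensive.
Import Order.TTheory GRing.Theory Num.Theory.
Local Open Scope ring_scope.

Section SeqMax.
Variable R : realDomainType.

Lemma foldr_max_ge (x0 x : R) (s : seq R) : x \in s -> x <= foldr Num.max x0 s.
Proof.
elim: s => //= a s IHs; rewrite inE le_max => /orP [/eqP -> | /IHs ->].
- by rewrite lexx.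
- by rewrite orbT.
Qed.

Lemma foldr_max_in (x0 : R) (s : seq R) : foldr Num.max x0 s \in x0 :: s.
Proof.
elim: s => [|a s IHs] /=; first by rewrite mem_head.
case: leP => _; last by rewrite !inE eqxx orbT.
by move: IHs; rewrite !inE => /orP [-> | ->]; rewrite ?orbT.
Qed.

Lemma seqmax_ge (s : seq R) (x : R) : x \in s -> x <= seqmax s.
Proof. exact: foldr_max_ge. Qed.

Lemma seqmax_in (s : seq R) : s != [::] -> seqmax s \in s.
Proof.
case: s => [//|a s] _; have := foldr_max_in a (a :: s).
by rewrite /seqmax inE => /orP [/eqP -> | //]; rewrite mem_head.
Qed.

End SeqMax.

Lemma strongly_connected_rev (V : finType) (E : rel V) :
  strongly_connected E -> strongly_connected [rel x y | E y x].
Proof. by move=> sc x y; rewrite connect_rev; apply: sc. Qed.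

Lemma in_edge_of_out_edge (V : finType) (E : rel V) (v w : V) :
  strongly_connected E -> E v w -> exists u, E u v.
Proof.
move=> sc Evw; have [wv | wv] := eqVneq w v; first by subst w; exists v.
have /connectP [p] := sc w v.
case/lastP: p => [_ vw | p x]; first by rewrite vw eqxx in wv.
rewrite last_rcons rcons_path => /andP [_ Ex] ->.
by exists (last w p).
Qed.

Section InOut.
Variables (R : realDomainType) (V : finType) (E : rel V).
Variables (alpha : V -> V -> R) (v : V).

Lemma alpha_in_ge (u : V) : E u v -> alpha u v <= alpha_in E alpha v.
Proof. by move=> Euv; apply/seqmax_ge/map_f; rewrite mem_filter mem_enum Euv. Qed.

Lemma alpha_out_ge (w : V) : E v w -> alpha v w <= alpha_out E alpha v.
Proof. by move=> Evw; apply/seqmax_ge/map_f; rewrite mem_filter mem_enum Evw. Qed.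

Lemma alpha_in_attained (u0 : V) :
  E u0 v -> exists2 u, E u v & alpha u v = alpha_in E alpha v.
Proof.
move=> Eu0; have /mapP [u] : alpha_in E alpha v \in [seq alpha u v | u <- enum V & E u v].
  apply: seqmax_in; apply/eqP => /(congr1 (fun s => alpha u0 v \in s)).
  by rewrite map_f // mem_filter mem_enum Eu0.
by rewrite mem_filter => /andP [Euv _] ->; exists u.
Qed.

Lemma alpha_out_attained (w0 : V) :
  E v w0 -> exists2 w, E v w & alpha v w = alpha_out E alpha v.
Proof.
move=> Ew0; have /mapP [w] : alpha_out E alpha v \in [seq alpha v w | w <- enum V & E v w].
  apply: seqmax_in; apply/eqP => /(congr1 (fun s => alpha v w0 \in s)).
  by rewrite map_f // mem_filter mem_enum Ew0.
by rewrite mem_filter => /andP [Evw _] ->; exists w.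
Qed.

(* Without edges at [v] both maxima are taken over [[::]] and equal [0]. *)
Lemma edges_at_unbalanced_vertex :
  strongly_connected E -> alpha_in E alpha v != alpha_out E alpha v ->
  (exists u, E u v) /\ (exists w, E v w).
Proof.
move=> sc neq.
suff [u Euv] : exists u, E u v.
  split; first by exists u.
  have [w Evw] := in_edge_of_out_edge (strongly_connected_rev sc) (Euv : [rel x y | E y x] v u).
  by exists w.
case: (pickP (E^~ v)) => [u Euv | noin]; first by exists u.
case: (pickP (E v)) => [w Evw | noout]; first exact: in_edge_of_out_edge Evw.
move: neq; rewrite /alpha_in /alpha_out (eq_filter noin) (eq_filter noout).
by rewrite filter_pred0 eqxx.
Qed.

End InOut.

Section LevelGraphs.
Variables (R : realDomainType) (V : finType) (E : rel V).

Lemma level_graph_le (beta gamma : V -> V -> R) (w : R) :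
  level_edges E beta w \subset level_edges E gamma w ->
  subgraph_le (level_graph E beta w) (level_graph E gamma w).
Proof.
move=> sub; rewrite /subgraph_le sub andbT; apply/subsetP => x.
rewrite !inE => /existsP [y xy]; apply/existsP; exists y.
by case/orP: xy => /(subsetP sub) ->; rewrite ?orbT.
Qed.

Lemma level_graph_eq (beta gamma : V -> V -> R) (w : R) :
  level_edges E beta w = level_edges E gamma w ->
  level_graph E beta w = level_graph E gamma w.
Proof. by rewrite /level_graph => ->. Qed.

Lemma level_graph_neq (beta gamma : V -> V -> R) (w : R) :
  level_edges E beta w != level_edges E gamma w ->
  level_graph E beta w != level_graph E gamma w.
Proof. by apply: contraNneq => /(congr1 snd) /= ->. Qed.

Lemma gf_lt_lowered (beta gamma : V -> V -> R) (M : R) :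
  (forall x y, E x y ->
     beta x y = gamma x y \/ beta x y < M /\ gamma x y <= M) ->
  (exists x y, [/\ E x y, gamma x y = M & beta x y < M]) ->
  gf_lt E beta gamma.
Proof.
move=> lowered [x0 [y0 [Exy0 gamma0 beta0]]].
have above w : M < w -> level_edges E beta w = level_edges E gamma w.
  move=> ltMw; apply/setP => -[x y]; rewrite !inE /=.
  case Exy: (E x y) => //=; case: (lowered x y Exy) => [-> // | [? ?]].
  by apply/idP/idP => ?; lra.
have sub : level_edges E beta M \subset level_edges E gamma M.
  apply/subsetP => -[x y]; rewrite !inE /= => /andP [Exy le_beta].
  by rewrite Exy /=; case: (lowered x y Exy) => [<- // | [? ?]]; lra.
have neq : level_edges E beta M != level_edges E gamma M.
  apply/eqP => /setP /(_ (x0, y0)); rewrite !inE /= Exy0 gamma0 lexx /=.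
  by rewrite leNgt beta0.
exists M; split.
- exact/eqP/level_graph_neq.
- by move=> w ltMw; apply/level_graph_eq/above.
- by rewrite /subgraph_lt level_graph_le // level_graph_neq.
Qed.

End LevelGraphs.

Section Balance.
Variables (R : realFieldType) (V : finType) (E : rel V).
Variables (alpha : V -> V -> R) (v : V).
Hypothesis unbalanced : alpha_in E alpha v != alpha_out E alpha v.

Let ai := alpha_in E alpha v.
Let ao := alpha_out E alpha v.
Let M := Num.max ai ao.

Lemma balance_lowers (x y : V) : E x y ->
  balance E alpha v x y = alpha x y \/
  balance E alpha v x y < M /\ alpha x y <= M.
Proof.
move=> Exy; rewrite /balance -/ai -/ao.
have [yv | yv] := eqVneq y v; have [xv | xv] := eqVneq x v => /=; try by left.
all: right; subst; rewrite /M.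
- have := alpha_in_ge alpha Exy; rewrite -/ai.
  by move: unbalanced; case: (ltgtP ai ao) => // ? _ ?; split; lra.
- have := alpha_out_ge alpha Exy; rewrite -/ao.
  by move: unbalanced; case: (ltgtP ai ao) => // ? _ ?; split; lra.
Qed.

(* The maximising edge is not a loop: a loop at [v] counts both as an in-edge
   and as an out-edge, so its weight is at most [min ai ao < M]. *)
Lemma balance_lowers_max :
  strongly_connected E ->
  exists x y, [/\ E x y, alpha x y = M & balance E alpha v x y < M].
Proof.
move=> sc; have [[u0 Eu0] [w0 Ew0]] := edges_at_unbalanced_vertex sc unbalanced.
rewrite /balance -/ai -/ao /M.
move: unbalanced; rewrite -/ai -/ao; case: (ltgtP ai ao) => // lt_io _.
- have [w Evw alpha_w] := alpha_out_attained alpha Ew0; rewrite -/ao in alpha_w.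
  have wv : w != v.
    by apply: contraTneq lt_io => wv; subst w; rewrite -leNgt -alpha_w alpha_in_ge.
  by exists v, w; rewrite eqxx (negbTE wv) alpha_w; split => //=; lra.
- have [u Euv alpha_u] := alpha_in_attained alpha Eu0; rewrite -/ai in alpha_u.
  have uv : u != v.
    by apply: contraTneq lt_io => uv; subst u; rewrite -leNgt -alpha_u alpha_out_ge.
  by exists u, v; rewrite eqxx uv alpha_u; split => //=; lra.
Qed.

End Balance.

Theorem lemma8 (R : realFieldType) (V : finType) (E : rel V)
  (alpha : V -> V -> R) (v : V) :
  strongly_connected E ->
  alpha_in E alpha v != alpha_out E alpha v ->
  gf_lt E (balance E alpha v) alpha.
Proof.
move=> sc unbalanced; apply: gf_lt_lowered.
- exact: balance_lowers.
- exact: balance_lowers_max.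
Qed.
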